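(* Let $G$ be a finite abelian $2$-group of order $2^n$, $n\geq 3$, which is not elementary abelian. Then for every $0\leq k\leq n$, $$s_k(G)\leq s_k(D_8\times C_2^{n-3}).$$
   Context: For a finite $2$-group $G$ of order $2^n$ and $0\le k\le n$, $s_k(G)$ denotes the number of subgroups of $G$ of order $2^k$. $D_8$ is the dihedral group of order $8$ and $C_2^{m}$ is the elementary abelian $2$-group of order $2^m$. *)

From mathcomp Require Import all_boot all_algebra all_fingroup all_solvable.
Set Implicit Arguments. Unset Strict Implicit. Unset Printing Implicit Defensive.

Definition s_ (gT : finGroupType) (G : {set gT}) (k : nat) : nat :=
  #|[set H : {group gT} | (H \subset G) && (#|H| == 2 ^ k)]|.

(* The group type D_8 x C_2^m: 'D_8 is MathComp's dihedral group of order 8,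
   'rV['Z_2]_m is the additive group (Z/2)^m, i.e. elementary abelian of order 2^m. *)
Definition D8xC2_type (m : nat) : finGroupType := ('D_8 * 'rV['Z_2]_m)%type.
Definition D8xC2 (m : nat) : {group D8xC2_type m} := [set: D8xC2_type m]%G.

(* Split the subgroups of order 2^(j+1) of a group according to whether they
   contain a fixed normal involution z: those that do correspond to the subgroups
   of order 2^j of the quotient by <z>, the others meet <z> trivially.

   For an abelian group X of order 2^m this gives s_k(X) <= [m, k]_2, with
   equality when X is elementary abelian.  The subgroups H of order 2^k meeting a
   cyclic subgroup N trivially are at most 2^k s_k(X/N) in number, since HN/N has
   order 2^k and H is a complement of N in HN, and a cyclic subgroup of an abelian
   p-group has at most as many complements as its index.

   If G is abelian of order 2^(m+2) but not elementary abelian, pick g of order 4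
   and z = g^2: a subgroup avoiding z meets <g> trivially, so
   s_(j+1)(G) <= [m+1, j]_2 + 2^(j+1) [m, j+1]_2.  In D_8 x C_2^m the central
   involution z = (x^2, 1) has an elementary abelian quotient, and z lies in the
   elementary abelian subgroup A = (<x^2> x <y>) x C_2^m of index 2, whose
   subgroups of order 2^(j+1) avoiding z number [m+2, j+1]_2 - [m+1, j]_2
   = 2^(j+1) [m+1, j+1]_2; hence D_8 x C_2^m attains this bound. *)

From mathcomp Require Import all_boot all_algebra all_fingroup all_solvable zify.
Set Implicit Arguments. Unset Strict Implicit. Unset Printing Implicit Defensive.

(* The Gaussian binomial coefficient [m, k]_2: the number of k-dimensional
   subspaces of F_2^m. *)
Fixpoint gbin2 (m k : nat) : nat :=
  match m, k with
  | _, 0 => 1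
  | 0, _.+1 => 0
  | m'.+1, k'.+1 => gbin2 m' k' + 2 ^ k'.+1 * gbin2 m' k'.+1
  end.

Lemma gbin20 m : gbin2 m 0 = 1. Proof. by case: m. Qed.

Lemma gbin2SS m k : gbin2 m.+1 k.+1 = gbin2 m k + 2 ^ k.+1 * gbin2 m k.+1.
Proof. by []. Qed.

Lemma gbin2_small m k : m < k -> gbin2 m k = 0.
Proof. by elim: m k => [|m IHm] [|k] //= ltmk; rewrite !IHm ?muln0 // ltnW. Qed.

Lemma gbin21 m : gbin2 m 1 = 2 ^ m - 1.
Proof. by elim: m => //= m ->; rewrite gbin20 expn1 expnS; have := expn_gt0 2 m; lia. Qed.

Lemma gbin2S_dual m k : gbin2 m.+1 k.+1 = gbin2 m k.+1 + 2 ^ (m - k) * gbin2 m k.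
Proof.
elim: m k => [|m IHm] [|k]; [by [] | by rewrite /= ?muln0 | | ].
  by rewrite !gbin21 gbin20 subn0 muln1 !expnS; have := expn_gt0 2 m; lia.
rewrite (gbin2SS m k.+1) (gbin2SS m k) gbin2SS !IHm subSS.
have [ltkm | lemk] := ltnP k m; last first.
  by rewrite (@gbin2_small m k.+1) ?(@gbin2_small m k.+2) ?muln0 ?addn0; lia.
have e1 : 2 ^ k.+2 * 2 ^ (m - k.+1) = 2 ^ m.+1 by rewrite -expnD; congr (2 ^ _); lia.
have e2 : 2 ^ (m - k) * 2 ^ k.+1 = 2 ^ m.+1 by rewrite -expnD; congr (2 ^ _); lia.
by rewrite !mulnDr !mulnA e1 e2; lia.
Qed.

Lemma card_fibers_le (T U : finType) (A : {set T}) (B : {set U}) (f : T -> U) c :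
  {in A, forall x, f x \in B} ->
  {in B, forall y, #|[set x in A | f x == y]| <= c} -> #|A| <= c * #|B|.
Proof.
move=> fAB fib; rewrite -sum1_card (partition_big f (mem B)) //= mulnC -sum_nat_const.
by apply: leq_sum => y By; apply: leq_trans (fib y By); rewrite sum1_card cardsE.
Qed.

Lemma card_fibers_ge (T U : finType) (A : {set T}) (B : {set U}) (f : T -> U) c :
  {in B, forall y, c <= #|[set x in A | f x == y]|} -> c * #|B| <= #|A|.
Proof.
move=> fib; rewrite -[#|A|]sum1_card (partition_big f predT) //= mulnC -sum_nat_const.
rewrite [X in _ <= X](bigID (mem B)) /=; apply: leq_trans _ (leq_addr _ _).
by apply: leq_sum => y By; rewrite sum1_card -cardsE fib.
Qed.

Local Open Scope group_scope.

Section Subgroups.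

Variable gT : finGroupType.
Implicit Types (X N M H K : {group gT}) (x y z : gT).

Lemma pgroup_card_exp p m X : prime p -> #|X| = (p ^ m)%N -> p.-group X.
Proof. by move=> p_pr oX; rewrite pgroupE oX pnatX (pnat_id p_pr). Qed.

Lemma s_0 X : s_ X 0 = 1%N.
Proof.
rewrite /s_ -(cards1 (1%G : {group gT})); apply: eq_card => H; rewrite !inE expn0.
apply/andP/eqP => [[_ /eqP/card1_trivg H1] | ->]; last by rewrite sub1G cards1.
exact: group_inj.
Qed.

Lemma s_eq0 X k : #|X| < 2 ^ k -> s_ X k = 0%N.
Proof.
move=> ltXk; apply/eqP; rewrite cards_eq0; apply/eqP/setP => H; rewrite !inE.
by apply/andP => -[/subset_leq_card]; rewrite leqNgt => /negP + /eqP oH; rewrite oH.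
Qed.

Lemma s_quotient X N j : N <| X ->
  s_ (X / N) j =
    #|[set L : {group gT} | [&& L \subset X, N \subset L & #|L| == (2 ^ j * #|N|)%N]]|.
Proof.
move=> nsNX; have [sNX nNX] := andP nsNX.
set S := [set L : {group gT} | _]; rewrite /s_.
have -> : [set K : {group coset_of N} | (K \subset X / N) && (#|K| == 2 ^ j)%N]
          = [set (L / N)%G | L in S].
  apply/setP => K; rewrite inE; apply/andP/imsetP => [[sKX /eqP oK] | [L]].
    exists (coset N @*^-1 K)%G; last by apply: group_inj; rewrite /= cosetpreK.
    by rewrite inE /= sub_cosetpre_quo // sKX sub_cosetpre card_cosetpre oK mulnC /=.
  rewrite inE => /and3P[sLX sNL /eqP oL] ->; split; first exact: quotientS.
  by rewrite /= card_quotient ?(subset_trans sLX nNX) // -divgS // oL mulnK.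
rewrite card_in_imset // => L1 L2; rewrite !inE => /and3P[sL1X sNL1 _] /and3P[sL2X sNL2 _].
move/(congr1 val) => /= eqL; apply: group_inj.
by apply: (quotient_inj _ _ eqL); apply: normalS nsNX.
Qed.

Lemma card_quotient_exp2 X N m n : N <| X ->
  #|X| = (2 ^ (n + m))%N -> #|N| = (2 ^ n)%N -> #|X / N| = (2 ^ m)%N.
Proof.
move=> /andP[sNX nNX] oX oN.
by rewrite card_quotient // -divgS // oX oN expnD mulKn ?expn_gt0.
Qed.

Lemma s_split_cycle2 X z j : z \in X -> #[z] = 2 -> <[z]> <| X ->
  s_ X j.+1 = (s_ (X / <[z]>) j
               + #|[set H : {group gT} | [&& H \subset X, #|H| == 2 ^ j.+1 & z \notin H]]|)%N.
Proof.
move=> Xz oz nsZX; rewrite s_quotient // -orderE oz -expnSr.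
rewrite /s_ -(cardsID [set H : {group gT} | z \in H]); congr (_ + _)%N.
  by apply: eq_card => H; rewrite !inE cycle_subG -andbA (andbC (_ == _)).
by apply: eq_card => H; rewrite !inE andbC -andbA.
Qed.

Lemma expg_p_maximal (p : nat) X M y : p.-group X -> maximal M X -> y \in X -> y ^+ p \in M.
Proof.
move=> pX maxM Xy; apply: subsetP (Phi_sub_max maxM) _ _.
rewrite (Phi_joing pX) mem_gen // inE; apply/orP; right.
by rewrite -[p]expn1 (Mho_p_elt 1 Xy (mem_p_elt pX Xy)).
Qed.

Lemma maximal_joing_cycle (p : nat) X M H y : p.-group X -> maximal M X ->
  H \subset X -> y \in H -> y \notin M -> H :=: (H :&: M) <*> <[y]>.
Proof.
move=> pX maxM sHX Hy notMy.
have nsMX := p_maximal_normal pX maxM.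
have ntX : X :!=: 1.
  by apply: contraNneq notMy => X1; rewrite (subsetP (sub1G M)) // -X1 (subsetP sHX).
have [p_pr _ _] := pgroup_pdiv pX ntX.
have iHM : #|H : H :&: M| = p.
  rewrite indexgI -indexMg (mulg_normal_maximal nsMX maxM sHX) ?(p_maximal_index pX) //.
  by apply: contra notMy => /subsetP; apply.
have maxHM : maximal (H :&: M) H by rewrite p_index_maximal ?subsetIl ?iHM.
have sYH : (H :&: M) <*> <[y]> \subset H by rewrite join_subG subsetIl cycle_subG.
have [-> // | prYH] := eqVproper sYH.
have defYM := (maxgroupP maxHM).2 _ prYH (joing_subl _ _).
have : y \in ((H :&: M) <*> <[y]>)%G by rewrite /= (subsetP (joing_subr _ _)) ?cycle_id.
by rewrite defYM inE (negbTE notMy) andbF.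
Qed.

Lemma card_Ohm1_cyclic_le (p : nat) N : prime p -> cyclic N -> p.-group N ->
  #|'Ohm_1(N)| <= p.
Proof.
move=> p_pr cycN pN; have [-> | ntN] := eqVneq N 1%G; last first.
  by rewrite (Ohm1_cyclic_pgroup_prime cycN pN ntN).
by rewrite Ohm1 cards1 prime_gt0.
Qed.

Lemma card_rcoset_expn_in_le (p : nat) X N K x :
  prime p -> abelian X -> p.-group N -> cyclic N -> N \subset X -> x \in X ->
  N :&: K = 1 -> #|[set y in N :* x | y ^+ p \in K]| <= p.
Proof.
move=> p_pr cXX pN cycN sNX Xx tiNK; set Y := [set y in _ | _].
have [y0 Yy0 | Y0] := pickP (mem Y); last by rewrite (eq_card0 Y0).
have /setIdP[Nxy0 Ky0] := Yy0; have NxE := rcoset_eqP Nxy0.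
have sNxX : N :* x \subset X by rewrite mul_subG ?sub1set.
apply: leq_trans (card_Ohm1_cyclic_le p_pr cycN pN).
rewrite -(card_rcoset 'Ohm_1(N) y0); apply/subset_leq_card/subsetP => y.
rewrite inE => /andP[Nxy Ky].
have Ny : y * y0^-1 \in N by rewrite -mem_rcoset NxE.
have cyy0 : commute y y0^-1 by apply: (centsP cXX); rewrite ?groupV (subsetP sNxX).
rewrite mem_rcoset (OhmEabelian pN) ?(abelianS (Ohm_sub 1 N)) ?cyclic_abelian //.
apply/LdivP; split => //; apply/set1gP; rewrite -tiNK inE groupX // expn1 expgMn //.
by rewrite expVgn groupM ?groupV.
Qed.

Lemma complements_setI N M X H : N \subset M -> M \subset X ->
  H \in [complements to N in X] -> (H :&: M)%G \in [complements to N in M].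
Proof.
move=> sNM sMX /complP[tiNH defX]; apply/complP; split.
  by apply/trivgP; rewrite -tiNH /= setIA subsetIl.
by rewrite /= group_modl // defX (setIidPr sMX).
Qed.

(* Fix x in X outside M.  A complement H with H :&: M = H1 meets the coset N :* x
   (as N * H = X) and is H1 <*> <[y]> for any y in H :&: N :* x; such y satisfy
   y ^+ p \in H1, so they all lie in one coset of 'Ohm_1(N), of order at most p. *)
Lemma card_complements_fiber_le (p : nat) X M N H1 :
  abelian X -> p.-group X -> maximal M X -> N \subset M -> cyclic N ->
  H1 \in [complements to N in M] ->
  #|[set H in [complements to N in X] | (H :&: M)%G == H1]| <= p.
Proof.
move=> cXX pX maxM sNM cycN /complP[tiNH1 _].
have prMX := maxgroupp maxM; have sMX := proper_sub prMX.
have [_ [x Xx notMx]] := properP prMX.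
have ntX : X :!=: 1 by apply: contraNneq notMx => X1; move: Xx; rewrite X1 => /set1gP->.
have [p_pr _ _] := pgroup_pdiv pX ntX.
have sNX := subset_trans sNM sMX; have pN := pgroupS sNX pX.
set F := [set H in _ | _].
have sFX : {in F, forall H, H \subset X}.
  by move=> H; rewrite inE => /andP[/complP[_ <-] _]; apply: mulG_subr.
pose y_ H := odflt 1 [pick y in H :&: N :* x].
have y_F : {in F, forall H, y_ H \in H :&: N :* x}.
  move=> H; rewrite inE => /andP[/complP[_ defX] _]; rewrite /y_.
  case: pickP => [// | noy]; move: Xx; rewrite -defX => /mulsgP[n h Nn Hh def_x].
  by have := noy h; rewrite inE Hh mem_rcoset def_x invMg mulKVg groupV Nn.
have notMy : {in F, forall H, y_ H \notin M}.
  move=> H /y_F/setIP[_]; rewrite mem_rcoset => Nyx; apply: contra notMx => My.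
  by rewrite -groupV -(groupMl _ My) (subsetP sNM).
have defH : {in F, forall H, H :=: H1 <*> <[y_ H]>}.
  move=> H FH; have /setIP[Hy _] := y_F H FH; have sHX := sFX H FH.
  move: FH (notMy H FH); rewrite inE => /andP[_ /eqP <-] notMyH.
  exact: maximal_joing_cycle pX maxM sHX Hy notMyH.
rewrite -(card_in_imset (f := y_)); last first.
  by move=> H H' FH FH' eqy; apply: group_inj; rewrite (defH H FH) (defH H' FH') eqy.
apply: leq_trans (card_rcoset_expn_in_le p_pr cXX pN cycN sNX Xx tiNH1).
apply/subset_leq_card/subsetP => _ /imsetP[H FH ->].
have /setIP[Hy Nxy] := y_F H FH; have sHX := sFX H FH.
rewrite inE Nxy /=; move: FH; rewrite inE => /andP[_ /eqP <-]; rewrite /= inE groupX //.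
exact: expg_p_maximal pX maxM (subsetP sHX _ Hy).
Qed.

Lemma card_complements_cyclic_le (p : nat) X N :
  abelian X -> p.-group X -> N \subset X -> cyclic N ->
  #|[complements to N in X]| <= #|X : N|.
Proof.
move=> cXX pX sNX cycN; have [c] := ubnP #|X|.
elim: c X cXX pX sNX => // c IHc X cXX pX sNX ltXc.
have [eqNX | [M maxM sNM]] := maximal_exists sNX.
  rewrite eqNX indexgg -(cards1 (1%G : {group gT})).
  apply/subset_leq_card/subsetP => H /complP[tiXH defX]; rewrite inE; apply/eqP/group_inj.
  by rewrite /= -tiXH (setIidPr _) // -defX mulG_subr.
have prMX := maxgroupp maxM; have sMX := proper_sub prMX.
have IHM : #|[complements to N in M]| <= #|M : N|.
  apply: IHc (abelianS sMX cXX) (pgroupS sMX pX) sNM _.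
  exact: leq_trans (proper_card prMX) ltXc.
rewrite -(Lagrange_index sMX sNM) (p_maximal_index pX maxM).
apply: leq_trans (leq_mul (leqnn p) IHM).
apply: (card_fibers_le (f := fun H : {group gT} => (H :&: M)%G)).
  by move=> H; apply: complements_setI.
by move=> H1; apply: card_complements_fiber_le.
Qed.

Lemma card_TI_subgroups_le X N k : abelian X -> 2.-group X -> N \subset X -> cyclic N ->
  #|[set H : {group gT} | [&& H \subset X, #|H| == (2 ^ k)%N & N :&: H == 1]]|
    <= (2 ^ k * s_ (X / N) k)%N.
Proof.
move=> cXX pX sNX cycN; have nsNX : N <| X by rewrite -sub_abelian_normal.
have joinE H : H \subset X -> N <*> H = N * H.
  by move=> sHX; apply/cent_joinEr/(subset_trans sHX)/(subset_trans cXX)/centS.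
rewrite s_quotient //; apply: (card_fibers_le (f := fun H => (N <*> H)%G)).
  move=> H; rewrite !inE => /and3P[sHX /eqP oH /eqP tiNH].
  by rewrite join_subG sNX sHX joing_subl /= joinE // TI_cardMg // oH mulnC.
move=> L; rewrite inE => /and3P[sLX sNL /eqP oL].
have -> : (2 ^ k)%N = #|L : N| by rewrite -divgS // oL mulnK.
apply: leq_trans (card_complements_cyclic_le (abelianS sLX cXX) (pgroupS sLX pX) sNL cycN).
apply/subset_leq_card/subsetP => H; rewrite !inE => /andP[/and3P[sHX _ ->]].
by move/eqP/(congr1 val) => /= <-; rewrite joinE.
Qed.

Lemma card_notin_subgroups_le X N z k :
  abelian X -> 2.-group X -> N \subset X -> cyclic N -> 'Ohm_1(N) = <[z]> -> #[z] = 2 ->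
  #|[set H : {group gT} | [&& H \subset X, #|H| == (2 ^ k)%N & z \notin H]]|
    <= (2 ^ k * s_ (X / N) k)%N.
Proof.
move=> cXX pX sNX cycN defZ oz; apply: leq_trans (card_TI_subgroups_le k cXX pX sNX cycN).
apply/subset_leq_card/subsetP => H; rewrite !inE => /and3P[-> -> notzH] /=.
apply: contraR notzH; rewrite setIC => /meet_Ohm1; rewrite defZ -cycle_subG => ntHZ.
by apply: contraR ntHZ => notZH; rewrite setIC prime_TIg // -orderE oz.
Qed.

Lemma abelem_joing_cycle X X1 H0 c : 2.-abelem X -> X1 \subset X -> H0 \subset X1 ->
  c \in X -> c \notin X1 ->
  #|H0 <*> <[c]>| = (#|H0| * 2)%N /\ (H0 <*> <[c]>) :&: X1 = H0.
Proof.
move=> abX sX1X sH0X1 Xc notX1c.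
have oc : #[c] = 2 by apply: abelem_order_p abX Xc _; apply: contraNneq notX1c => ->.
have tiCX1 : <[c]> :&: X1 = 1 by rewrite prime_TIg ?cycle_subG // -orderE oc.
have -> : H0 <*> <[c]> = H0 * <[c]>.
  apply/cent_joinEr; rewrite cycle_subG (subsetP _ c Xc) //.
  exact: subset_trans (abelem_abelian abX) (centS (subset_trans sH0X1 sX1X)).
split; last by rewrite -group_modl // tiCX1 mulg1.
rewrite TI_cardMg -?orderE ?oc //; apply/trivgP.
by rewrite -tiCX1 [<[c]> :&: _]setIC setSI.
Qed.

(* The subgroups H0 <*> <[a * b]> with b in X1 lie in the fiber, and each of them
   determines the coset b *: H0, so there are at least #|X1 : H0| of them. *)
Lemma card_meet_fiber_ge X X1 H0 a j : 2.-abelem X -> X1 \subset X ->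
  a \in X -> a \notin X1 -> H0 \subset X1 -> #|H0| = (2 ^ j)%N ->
  #|X1 : H0| <=
    #|[set H in [set H : {group gT} | (H \subset X) && (#|H| == 2 ^ j.+1)%N]
                  :\: [set H : {group gT} | H \subset X1] | (H :&: X1)%G == H0]|.
Proof.
move=> abX sX1X Xa notX1a sH0X1 oH0.
pose K_ b := (H0 <*> <[a * b]>)%G.
have Xab b : b \in X1 -> a * b \in X by move=> X1b; rewrite groupM // (subsetP sX1X).
have notX1ab b : b \in X1 -> a * b \notin X1 by move=> X1b; rewrite groupMr.
have XK b : b \in X1 -> K_ b \subset X.
  by move=> X1b; rewrite join_subG cycle_subG (subset_trans sH0X1 sX1X) Xab.
have KX1 b : b \in X1 -> #|K_ b| = (#|H0| * 2)%N /\ K_ b :&: X1 = H0.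
  by move=> X1b; apply: (abelem_joing_cycle abX sX1X sH0X1); [apply: Xab | apply: notX1ab].
have Kab b : a * b \in K_ b by rewrite (subsetP (joing_subr _ _)) ?cycle_id.
set B := [set K_ b | b in X1].
have leX1B : #|X1| <= #|H0| * #|B|.
  apply: (card_fibers_le (f := K_)) => [b X1b | _ /imsetP[b0 X1b0 ->]].
    exact: imset_f.
  rewrite -(card_lcoset H0 b0); apply/subset_leq_card/subsetP => b.
  rewrite inE => /andP[X1b /eqP eqK]; rewrite mem_lcoset -(KX1 b0 X1b0).2 inE.
  rewrite [_ \in X1]groupM ?groupV // andbT.
  have -> : b0^-1 * b = (a * b0)^-1 * (a * b) by rewrite invMg -mulgA mulKg.
  by rewrite groupM ?groupV ?Kab // -eqK Kab.
rewrite -(leq_pmul2l (cardG_gt0 H0)) Lagrange //; apply: leq_trans leX1B _.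
rewrite leq_pmul2l //; apply/subset_leq_card/subsetP => _ /imsetP[b X1b ->].
have [oK defK] := KX1 b X1b.
rewrite !inE XK // oK oH0 -expnSr eqxx /=; apply/andP; split.
  by rewrite andbT; apply: contra (notX1ab b X1b) => /subsetP; apply.
by apply/eqP/group_inj.
Qed.

Lemma abelian_not_abelem_order4 X :
  abelian X -> 2.-group X -> ~~ 2.-abelem X -> exists2 g, g \in X & #[g] = 4.
Proof.
move=> cXX pX nabX; have [x Xx x2] : exists2 x, x \in X & x ^+ 2 != 1.
  apply/exists_inP; apply: contraR nabX => /exists_inPn x2.
  by apply/abelemP => //; split => // y Xy; apply/eqP/negbNE/x2.
have ox : #[x] = (2 ^ logn 2 #[x])%N := card_pgroup (mem_p_elt pX Xx).
set e := logn 2 #[x] in ox.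
have le2e : 2 <= e.
  by rewrite ltnNge; apply: contra x2 => le1; rewrite -order_dvdn ox -{2}(expn1 2) dvdn_exp2l.
exists (x ^+ (2 ^ (e - 2))); first exact: groupX.
rewrite orderXdiv ox ?dvdn_exp2l ?leq_subr // -expnB ?leq_subr //.
by rewrite subKn.
Qed.

End Subgroups.

Lemma s_abelian_le m (gT : finGroupType) (X : {group gT}) k :
  abelian X -> #|X| = (2 ^ m)%N -> s_ X k <= gbin2 m k.
Proof.
elim: m gT X k => [|m IHm] gT X [|j] cXX oX; rewrite ?s_0 ?gbin20 //.
  by rewrite s_eq0 // oX ltn_exp2l.
have pX := pgroup_card_exp (isT : prime 2) oX.
have [z Xz oz] : {z | z \in X & #[z] = 2} by apply: Cauchy; rewrite // oX expnS dvdn_mulr.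
have nsZX : <[z]> <| X by rewrite -sub_abelian_normal ?cycle_subG.
have oXZ : #|X / <[z]>| = (2 ^ m)%N.
  by apply: (card_quotient_exp2 (n := 1) nsZX oX); rewrite -orderE oz.
rewrite (s_split_cycle2 j Xz oz nsZX) gbin2SS leq_add ?IHm ?quotient_abelian //.
apply: leq_trans (_ : (2 ^ j.+1 * s_ (X / <[z]>) j.+1)%N <= _).
  apply: card_notin_subgroups_le => //; rewrite ?cycle_subG ?cycle_cyclic //.
  by rewrite (@Ohm1_id _ 2) // prime_abelem // -orderE oz.
by rewrite leq_mul2l IHm ?orbT ?quotient_abelian.
Qed.

Lemma s_abelem_ge m (gT : finGroupType) (X : {group gT}) k :
  2.-abelem X -> #|X| = (2 ^ m)%N -> gbin2 m k <= s_ X k.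
Proof.
elim: m gT X k => [|m IHm] gT X [|j] abX oX; rewrite ?s_0 ?gbin20 //.
have [a Xa oa] : {a | a \in X & #[a] = 2} by apply: Cauchy; rewrite // oX expnS dvdn_mulr.
have [X1 defX] : exists X1 : {group gT}, <[a]> \x X1 = X.
  by apply: abelem_split_dprod abX _; rewrite cycle_subG.
have [_ mulaX1 _ tiaX1] := dprodP defX.
have sX1X : X1 \subset X by rewrite -mulaX1 mulG_subr.
have oX1 : #|X1| = (2 ^ m)%N.
  have := dprod_card defX; rewrite -orderE oa oX expnS => /eqP.
  by rewrite eqn_pmul2l // => /eqP.
have notX1a : a \notin X1.
  apply/negP => X1a; have : a \in <[a]> :&: X1 by rewrite inE cycle_id.
  by rewrite tiaX1 => /set1gP a1; rewrite a1 order1 in oa.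
have abX1 := abelemS sX1X abX.
rewrite gbin2S_dual /s_ -(cardsID [set H : {group gT} | H \subset X1]); apply: leq_add.
  apply: leq_trans (IHm _ _ j.+1 abX1 oX1) (eq_leq _); apply: eq_card => H; rewrite !inE.
  by case sHX1: (H \subset X1); rewrite ?andbF // andbT (subset_trans sHX1 sX1X).
apply: leq_trans (_ : (2 ^ (m - j) * s_ X1 j)%N <= _); first by rewrite leq_mul2l IHm ?orbT.
apply: (card_fibers_ge (f := fun H : {group gT} => (H :&: X1)%G)) => H0.
rewrite inE => /andP[sH0X1 /eqP oH0].
have -> : (2 ^ (m - j))%N = #|X1 : H0|.
  have lejm : j <= m by rewrite -(leq_exp2l _ _ (ltnSn 1)) -oX1 -oH0 subset_leq_card.
  by rewrite -divgS // oX1 oH0 expnB.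
exact: card_meet_fiber_ge abX sX1X Xa notX1a sH0X1 oH0.
Qed.

Lemma s_abelian_not_abelem_le m (gT : finGroupType) (G : {group gT}) j :
  abelian G -> ~~ 2.-abelem G -> #|G| = (2 ^ m.+2)%N ->
  s_ G j.+1 <= gbin2 m.+1 j + 2 ^ j.+1 * gbin2 m j.+1.
Proof.
move=> cGG nabG oG; have pG := pgroup_card_exp (isT : prime 2) oG.
have [g Gg og] := abelian_not_abelem_order4 cGG pG nabG.
have oz : #[g ^+ 2] = 2 by rewrite orderXdiv og.
have nsZG : <[g ^+ 2]> <| G by rewrite -sub_abelian_normal ?cycle_subG ?groupX.
have nsgG : <[g]> <| G by rewrite -sub_abelian_normal ?cycle_subG.
rewrite (s_split_cycle2 j (groupX 2 Gg) oz nsZG); apply: leq_add.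
  apply: s_abelian_le; first exact: quotient_abelian.
  by apply: (card_quotient_exp2 (n := 1) nsZG oG); rewrite -orderE oz.
apply: leq_trans (card_notin_subgroups_le _ cGG pG _ (cycle_cyclic g) _ oz) _.
- by rewrite cycle_subG.
- by rewrite (Ohm_p_cycle 1 (mem_p_elt pG Gg)) og.
rewrite leq_mul2l s_abelian_le ?orbT ?quotient_abelian //.
by apply: (card_quotient_exp2 (n := 2) nsgG oG); rewrite -orderE og.
Qed.

Lemma s_ge_abelem_sections r n (gT : finGroupType) (D A : {group gT}) z j :
  <[z]> <| D -> #[z] = 2 -> 2.-abelem (D / <[z]>) -> #|D / <[z]>| = (2 ^ r)%N ->
  z \in A -> A \subset D -> 2.-abelem A -> #|A| = (2 ^ n.+1)%N ->
  gbin2 r j + 2 ^ j.+1 * gbin2 n j.+1 <= s_ D j.+1.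
Proof.
move=> nsZD oz abDZ oDZ Az sAD abA oA; have cAA := abelem_abelian abA.
have nsZA : <[z]> <| A by rewrite -sub_abelian_normal ?cycle_subG.
have oAZ : #|A / <[z]>| = (2 ^ n)%N.
  by apply: (card_quotient_exp2 (n := 1) nsZA oA); rewrite -orderE oz.
rewrite (s_split_cycle2 j (subsetP sAD z Az) oz nsZD) leq_add ?s_abelem_ge //.
apply: leq_trans
  (_ : _ <= #|[set H : {group gT} | [&& H \subset A, #|H| == (2 ^ j.+1)%N & z \notin H]]|) _.
  have := s_split_cycle2 j Az oz nsZA; have := s_abelem_ge j.+1 abA oA.
  have : s_ (A / <[z]>) j <= gbin2 n j by apply: s_abelian_le oAZ; apply: quotient_abelian.
  by rewrite gbin2SS; lia.
apply/subset_leq_card/subsetP => H; rewrite !inE => /and3P[sHA -> ->].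
by rewrite (subset_trans sHA sAD).
Qed.

Lemma expg_pair (gT1 gT2 : finGroupType) (u : gT1 * gT2) n :
  u ^+ n = (u.1 ^+ n, u.2 ^+ n).
Proof. by elim: n => [|n IHn]; rewrite ?expg0 // !expgS IHn. Qed.

Lemma setX_abelem p (gT1 gT2 : finGroupType) (H1 : {group gT1}) (H2 : {group gT2}) :
  p.-abelem H1 -> p.-abelem H2 -> p.-abelem (setX H1 H2).
Proof.
move=> abH1 abH2; rewrite (dprod_abelem p (setX_dprod H1 H2)).
by rewrite -(isog_abelem (isog_setX1 gT2 H1)) -(isog_abelem (isog_set1X gT1 H2)) abH1.
Qed.

Lemma quotient_exponent2_abelem (gT : finGroupType) (D N : {group gT}) :
  N <| D -> {in D, forall d, d ^+ 2 \in N} -> 2.-abelem (D / N).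
Proof.
move=> nsND sqDN; apply/exponent2_abelem/exponentP => _ /morphimP[d Nd Dd ->].
by rewrite -morphX //= coset_id ?sqDN.
Qed.

Lemma rV_Z2_abelem m : 2.-abelem [set: 'rV['Z_2]_m].
Proof.
apply/exponent2_abelem/exponentP => e _; rewrite expgS expg1.
by apply/matrixP => i j; rewrite !mxE /= GRing.addrr_pchar2.
Qed.

Lemma card_rV_Z2 m : #|[set: 'rV['Z_2]_m]| = (2 ^ m)%N.
Proof. by rewrite cardsT card_mx card_ord mul1n. Qed.

Lemma D8_structure : exists x y : 'D_8,
  [/\ #[x] = 4, #[y] = 2, y \notin <[x]>, x ^+ 2 \in 'Z('D_8) & 'Mho^1('D_8) = <[x ^+ 2]>].
Proof.
have isoD8 : 'D_8 \isog 'D_(2 ^ 3) := isog_refl _.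
have [[x y] genD8 [oy _]] := generators_2dihedral (isT : 3 > 1) isoD8.
have [_ _ [_ Mho] _ [Z _ _ _ _]] := dihedral2_structure (isT : 3 > 1) genD8 isoD8.
have [_ _ ox /setDP[_ notXy]] := genD8.
by exists x, y; split; rewrite ?Mho ?Z ?cycle_id.
Qed.

Lemma s_D8xC2_ge m j :
  gbin2 m.+2 j + 2 ^ j.+1 * gbin2 m.+1 j.+1 <= s_ (D8xC2 m) j.+1.
Proof.
have [x [y [ox oy notXy /centerP[_ cx2] MhoD8]]] := D8_structure.
have pD8 : 2.-group ('D_8) := pgroup_card_exp (m := 3) (isT : prime 2) (@card_dihedral 4 isT).
have ox2 : #[x ^+ 2] = 2 by rewrite orderXdiv ox.
pose z : D8xC2_type m := pairg1 _ (x ^+ 2).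
have oz : #[z] = 2 by rewrite order_injm ?injm_pairg1 ?inE.
have nsZD : <[z]> <| D8xC2 m.
  rewrite sub_center_normal // cycle_subG; apply/centerP; split=> // -[d1 d2] _.
  by rewrite /commute /=; congr (_, _); [apply: cx2; rewrite inE | rewrite mul1g mulg1].
have oD : #|D8xC2 m| = (2 ^ (1 + m.+2))%N.
  by rewrite cardsT card_prod -!cardsT (@card_dihedral 4) // card_rV_Z2 !expnS !mulnA.
have sqD : {in D8xC2 m, forall d, d ^+ 2 \in <[z]>}.
  move=> [d1 d2] _; have [_ sqE] := abelemP (isT : prime 2) (rV_Z2_abelem m).
  rewrite expg_pair /= sqE ?inE // -[(_, 1)]/(pairg1 _ (d1 ^+ 2)) -morphim_cycle ?inE //.
  rewrite mem_morphim ?inE // -MhoD8.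
  exact: (Mho_p_elt 1 (in_setT d1) (mem_p_elt pD8 (in_setT d1))).
pose V := (<[x ^+ 2]> <*> <[y]>)%G.
have defV : <[x ^+ 2]> \x <[y]> = V.
  apply: dprodEY => /=; first by apply/cents_cycle/commute_sym/cx2; rewrite inE.
  rewrite setIC prime_TIg -?orderE ?oy // cycle_subG.
  by apply: contra notXy; apply: subsetP (cycleX x 2) y.
have abV : 2.-abelem V by rewrite (dprod_abelem 2 defV) !cycle_abelem ?ox2 ?oy ?orbT.
have oV : #|V| = 4 by rewrite -(dprod_card defV) -!orderE ox2 oy.
pose A := setX_group V [set: 'rV['Z_2]_m]%G.
have Az : z \in A by rewrite in_setX in_setT andbT /= (subsetP (joing_subl _ _)) ?cycle_id.
have abA : 2.-abelem A by apply: setX_abelem abV (rV_Z2_abelem m).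
have oA : #|A| = (2 ^ m.+2)%N by rewrite cardsX oV card_rV_Z2 !expnS mulnA.
have abDZ := quotient_exponent2_abelem nsZD sqD.
have oDZ : #|D8xC2 m / <[z]>| = (2 ^ m.+2)%N.
  by apply: (card_quotient_exp2 (n := 1) nsZD oD); rewrite -orderE oz.
exact: s_ge_abelem_sections nsZD oz abDZ oDZ Az (subsetT A) abA oA.
Qed.

Local Close Scope group_scope.

Theorem lemma2p3 (gT : finGroupType) (G : {group gT}) (n : nat) :
  3 <= n -> #|G| = 2 ^ n -> abelian G -> ~~ (2.-abelem G)%g ->
  forall k, k <= n -> s_ G k <= s_ (D8xC2 (n - 3)) k.
Proof.
move=> n_ge3 oG cGG nabG [|j] _; first by rewrite !s_0.
have [m defn] : exists m, n = m.+3 by exists (n - 3); lia.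
rewrite defn subSS subSS subSS subn0 in oG *.
exact: leq_trans (s_abelian_not_abelem_le j cGG nabG oG) (s_D8xC2_ge m j).
Qed.
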